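(* Let $\Theta$ be an action theory, $\Phi$ a law, and $\Theta'\in\Theta\ominus\Phi$. Then $\Theta\models_{PDL}\Theta'$.
   Context: Fix a finite set $\mathrm{Act}$ of atomic actions and a finite set $\mathrm{Prop}$ of atoms; $\mathrm{Lit}$ is the set of literals. Boolean formulas are classical propositional formulas over $\mathrm{Prop}$, $\models_{CPL}$ classical consequence. Modal formulas are built from Boolean formulas with the Boolean connectives and $[a]$ ($a\in\mathrm{Act}$); $\langle a\rangle\Phi:=\neg[a]\neg\Phi$. A PDL-model is $\langle W,R\rangle$, $W$ a set of valuations (maximal consistent sets of literals), $R_a\subseteq W\times W$ for each $a$; truth is standard ($w\models p$ iff $p\in w$, $w\models[a]\Phi$ iff all $R_a$-successors satisfy $\Phi$); a model satisfies a formula iff it holds at all worlds; $\Sigma\models_{PDL}\Phi$ iff every model of $\Sigma$ is a model of $\Phi$ ($\Theta\models_{PDL}\Theta'$ means $\Theta\models_{PDL}\Phi$ for all $\Phi\in\Theta'$). A static law is a Boolean formula; an effect law for $a$ is $\varphi\to[a]\psi$; an executability law for $a$ is $\varphi\to\langle a\rangle\top$ ($\varphi,\psi$ Boolean); a law is any of these. An action theory is a finite set $\Theta=S\cup E\cup X$ of static, effect and executability laws; $E_a,X_a$ are those about $a$. Syntactic contraction $\Theta\ominus\Phi$ (a set of action theories). Notation: $\bigwedge S$ is the conjunction of $S$; $IP(\chi)$ is the set of prime implicants of the Boolean formula $\chi$ (weakest conjunctions of literals implying $\chi$); for a term $\tau$, $\mathrm{atm}(\tau)$ is the set of atoms occurring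 in it, and for $A\subseteq\mathrm{Prop}\setminus\mathrm{atm}(\tau)$, $\varphi_A:=\bigwedge_{p\in A}p\wedge\bigwedge_{p\in\mathrm{Prop}\setminus(\mathrm{atm}(\tau)\cup A)}\neg p$. (1) Executability law $\varphi\to\langle a\rangle\top$: if $\Theta\not\models_{PDL}\varphi\to\langle a\rangle\top$ the result is $\{\Theta\}$; otherwise it consists of the theories $(\Theta\setminus X_a)\cup\{(\varphi_i\wedge\neg(\tau\wedge\varphi_A))\to\langle a\rangle\top:\varphi_i\to\langle a\rangle\top\in X_a\}$ for all $\tau\in IP(\bigwedge S\wedge\varphi)$ and $A\subseteq\mathrm{Prop}\setminus\mathrm{atm}(\tau)$ with $S\not\models_{CPL}\neg(\tau\wedge\varphi_A)$. (2) Effect law $\varphi\to[a]\psi$: if $\Theta\not\models_{PDL}\varphi\to[a]\psi$ the result is $\{\Theta\}$; otherwise let $E^-_a$ be the union of all minimal subsets $E'\subseteq E_a$ with $S\cup E'\models_{PDL}\varphi\to[a]\psi$. For every $\tau\in IP(\bigwedge S\wedge\varphi)$, $A\subseteq\mathrm{Prop}\setminus\mathrm{atm}(\tau)$ with $S\not\models_{CPL}\neg(\tau\wedge\varphi_A)$, and $\tau'\in IP(\bigwedge S\wedge\neg\psi)$, the result contains $\Theta'=(\Theta\setminus E^-_a)\cup\{(\varphi_i\wedge\neg(\tau\wedge\varphi_A))\to[a]\psi_i:\varphi_i\to[a]\psi_i\in E^-_a\}\cup\{(\varphi_i\wedge\tau\wedge\varphi_A)\to[a](\psi_i\vee\tau'):\varphi_i\to[a]\psi_i\in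 E^-_a\}\cup\{(\tau\wedge\varphi_A\wedge\ell)\to[a](\psi\vee\ell):\ell\in L$ for some $L\subseteq\mathrm{Lit}$ with $S\models_{CPL}(\tau\wedge\varphi_A)\to\bigwedge L$ and $S\not\models_{CPL}\neg(\tau'\wedge\bigwedge L)$, and ($\Theta\not\models_{PDL}(\tau\wedge\varphi_A\wedge\ell)\to[a]\neg\ell$ or $\ell$ is a literal of $\tau'$)$\}$. (3) Static law $\varphi$: if $S\not\models_{CPL}\varphi$ the result is $\{\Theta\}$; otherwise, for every $S^-\in S\ominus\varphi$ (a given classical contraction operator on sets of Boolean formulas, assumed to behave like a Katsuno–Mendelzon contraction, in particular $S\models_{CPL}\bigwedge S^-$, and to be sound, complete and minimal w.r.t. its semantics), the result contains the theory obtained from $(\Theta\setminus S)\cup S^-$ by replacing, for each action $a$, the laws of $X_a$ by $\{(\varphi_i\wedge\varphi)\to\langle a\rangle\top:\varphi_i\to\langle a\rangle\top\in X_a\}$ and adding $\neg\varphi\to[a]\bot$. *)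

From mathcomp Require Import all_boot.
From Stdlib Require List.

Set Implicit Arguments.
Unset Strict Implicit.
Unset Printing Implicit Defensive.

Section ActionTheories.

Variable atom : finType.
Variable act : finType.

Inductive bform : Type :=
| BVar of atom
| BTop
| BBot
| BNeg of bform
| BAnd of bform & bform
| BOr of bform & bform
| BImp of bform & bform.

(* valuations = maximal consistent sets of literals, represented as
   total assignments atom -> bool *)
Definition valuation := atom -> bool.

Fixpoint beval (v : valuation) (f : bform) : bool :=
  match f with
  | BVar p => v p
  | BTop => true
  | BBot => false
  | BNeg g => ~~ beval v g
  | BAnd g h => beval v g && beval v h
  | BOr g h => beval v g || beval v h
  | BImp g h => beval v g ==> beval v h
  end.

Definition cpl_ent (S : seq bform) (phi : bform) : Prop :=
  forall v : valuation, (forall s, List.In s S -> beval v s) -> beval v phi.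

Definition bconj (s : seq bform) : bform := foldr BAnd BTop s.

Definition lit : finType := (atom * bool)%type.
Definition litf (l : lit) : bform := if l.2 then BVar l.1 else BNeg (BVar l.1).

Definition termf (t : {set lit}) : bform := bconj [seq litf l | l <- enum t].
Definition atm (t : {set lit}) : {set atom} := [set l.1 | l in t].
Definition consistent_term (t : {set lit}) : Prop :=
  forall p : atom, ~ ((p, true) \in t /\ (p, false) \in t).

Definition prime_implicant (chi : bform) (t : {set lit}) : Prop :=
  [/\ consistent_term t,
      (forall v, beval v (termf t) -> beval v chi)
    & (forall t' : {set lit}, t' \proper t ->
         ~ (forall v, beval v (termf t') -> beval v chi))].

Definition phiA (t : {set lit}) (A : {set atom}) : bform :=
  BAnd (bconj [seq BVar p | p <- enum A])
       (bconj [seq BNeg (BVar p) | p <- enum (~: (atm t :|: A))]).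

Definition tauA (t : {set lit}) (A : {set atom}) : bform := BAnd (termf t) (phiA t A).

Inductive mform : Type :=
| MB of bform
| MNeg of mform
| MAnd of mform & mform
| MOr of mform & mform
| MImp of mform & mform
| MBox of act & mform.

Definition MDia (a : act) (f : mform) : mform := MNeg (MBox a (MNeg f)).

Record model : Type := Model {
  mW : valuation -> Prop;
  mR : act -> valuation -> valuation -> Prop;
  mR_W : forall a w v, mR a w v -> mW w /\ mW v
}.

Fixpoint holds (M : model) (w : valuation) (f : mform) : Prop :=
  match f with
  | MB b => beval w b
  | MNeg g => ~ holds M w g
  | MAnd g h => holds M w g /\ holds M w h
  | MOr g h => holds M w g \/ holds M w h
  | MImp g h => holds M w g -> holds M w h
  | MBox a g => forall v, mR M a w v -> holds M v g
  end.

Definition mvalid (M : model) (f : mform) : Prop := forall w, mW M w -> holds M w f.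

Inductive law : Type :=
| Static of bform
| Effect of act & bform & bform
| Exec of act & bform.

Definition law_form (l : law) : mform :=
  match l with
  | Static phi => MB phi
  | Effect a phi psi => MImp (MB phi) (MBox a (MB psi))
  | Exec a phi => MImp (MB phi) (MDia a (MB BTop))
  end.

Definition pdl_ent (Sig : law -> Prop) (f : mform) : Prop :=
  forall M : model, (forall l, Sig l -> mvalid M (law_form l)) -> mvalid M f.

Definition theory := seq law.
Definition th (T : theory) : law -> Prop := fun l => List.In l T.

Definition th_ent (T T' : theory) : Prop :=
  forall l, List.In l T' -> pdl_ent (th T) (law_form l).

Definition same_theory (T T' : theory) : Prop :=
  forall l, List.In l T' <-> List.In l T.

Definition statics (T : theory) : seq bform :=
  pmap (fun l => if l is Static f then Some f else None) T.

Definition is_static (l : law) : Prop := exists phi, l = Static phi.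
Definition is_effect (a : act) (l : law) : Prop := exists phi psi, l = Effect a phi psi.
Definition is_exec (a : act) (l : law) : Prop := exists phi, l = Exec a phi.

Definition contr_exec (T : theory) (a : act) (phi : bform) (T' : theory) : Prop :=
  let S := statics T in
  (~ pdl_ent (th T) (law_form (Exec a phi)) /\ same_theory T T') \/
  (pdl_ent (th T) (law_form (Exec a phi)) /\
   exists (tau : {set lit}) (A : {set atom}),
     [/\ prime_implicant (BAnd (bconj S) phi) tau,
         A \subset ~: atm tau,
         ~ cpl_ent S (BNeg (tauA tau A))
       & forall l, List.In l T' <->
           ((List.In l T /\ ~ is_exec a l) \/
            (exists phii, List.In (Exec a phii) T /\
                          l = Exec a (BAnd phii (BNeg (tauA tau A)))))]).

(* E^-_a : union of all minimal subsets E' of E_a with S u E' |= phi -> [a]psi *)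
Definition Eminus (T : theory) (a : act) (phi psi : bform) (e : law) : Prop :=
  let target := law_form (Effect a phi psi) in
  let SU (E' : law -> Prop) := fun l => (List.In l T /\ is_static l) \/ E' l in
  exists E' : law -> Prop,
    [/\ (forall l, E' l -> List.In l T /\ is_effect a l),
        pdl_ent (SU E') target,
        (forall E'' : law -> Prop, (forall l, E'' l -> E' l) ->
            pdl_ent (SU E'') target -> forall l, E' l -> E'' l)
      & E' e].

Definition contr_effect (T : theory) (a : act) (phi psi : bform) (T' : theory) : Prop :=
  let S := statics T in
  let Em := Eminus T a phi psi in
  (~ pdl_ent (th T) (law_form (Effect a phi psi)) /\ same_theory T T') \/
  (pdl_ent (th T) (law_form (Effect a phi psi)) /\
   exists (tau : {set lit}) (A : {set atom}) (tau' : {set lit}),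
     [/\ prime_implicant (BAnd (bconj S) phi) tau,
         A \subset ~: atm tau,
         ~ cpl_ent S (BNeg (tauA tau A)),
         prime_implicant (BAnd (bconj S) (BNeg psi)) tau'
       & forall l, List.In l T' <->
           [\/ List.In l T /\ ~ Em l,
               (exists phii psii, Em (Effect a phii psii) /\
                  l = Effect a (BAnd phii (BNeg (tauA tau A))) psii),
               (exists phii psii, Em (Effect a phii psii) /\
                  l = Effect a (BAnd phii (tauA tau A)) (BOr psii (termf tau')))
             | (exists (ell : lit) (L : {set lit}),
                  [/\ ell \in L,
                      cpl_ent S (BImp (tauA tau A) (termf L)),
                      ~ cpl_ent S (BNeg (BAnd (termf tau') (termf L))),
                      (~ pdl_ent (th T) (law_form
                            (Effect a (BAnd (tauA tau A) (litf ell)) (BNeg (litf ell))))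
                       \/ ell \in tau')
                    & l = Effect a (BAnd (tauA tau A) (litf ell)) (BOr psi (litf ell))])]]).

(* scontr S phi Sm : Sm is an element of S (-) phi, for the given classical
   contraction operator on sets of Boolean formulas *)
Definition contr_static (scontr : seq bform -> bform -> seq bform -> Prop)
    (T : theory) (phi : bform) (T' : theory) : Prop :=
  let S := statics T in
  (~ cpl_ent S phi /\ same_theory T T') \/
  (cpl_ent S phi /\
   exists Sm : seq bform,
     scontr S phi Sm /\
     forall l, List.In l T' <->
       [\/ List.In l T /\ ~ is_static l /\ ~ (exists a, is_exec a l),
           (exists f, List.In f Sm /\ l = Static f),
           (exists a phii, List.In (Exec a phii) T /\ l = Exec a (BAnd phii phi))
         | (exists a, l = Effect a (BNeg phi) BBot)]).

Definition contraction (scontr : seq bform -> bform -> seq bform -> Prop)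
    (T : theory) (Phi : law) (T' : theory) : Prop :=
  match Phi with
  | Static phi => contr_static scontr T phi T'
  | Effect a phi psi => contr_effect T a phi psi T'
  | Exec a phi => contr_exec T a phi T'
  end.

End ActionTheories.

(* Every law of a contracted theory is either a law of the original theory, a
   law obtained from one by strengthening its antecedent (and, for effect laws,
   weakening its consequent), a classical consequence of the static laws, or
   an effect law [~ phi -> [a] bot] whose antecedent the static laws refute.
   Each kind of law is valid in every model of the original theory. *)
From mathcomp Require Import all_boot.
From Stdlib Require List.

Set Implicit Arguments.
Unset Strict Implicit.
Unset Printing Implicit Defensive.

Section ContractionEntailment.

Variables atom act : finType.

Implicit Types (T : theory atom act) (Sig : law atom act -> Prop)
  (a : act) (phi psi chi : bform atom) (w : valuation atom).

Lemma bconj_in w s phi : List.In phi s -> beval w (bconj s) -> beval w phi.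
Proof. by elim: s => [|psi s IH] //= [->|/IH Hs] /andP []. Qed.

Lemma cpl_ent_bconj_in (S Sm : seq (bform atom)) phi :
  cpl_ent S (bconj Sm) -> List.In phi Sm -> cpl_ent S phi.
Proof. by move=> HS Hphi w /HS; apply: bconj_in. Qed.

Lemma prime_implicant_andr chi phi tau w :
  prime_implicant (BAnd chi phi) tau -> beval w (termf tau) -> beval w phi.
Proof. by case=> _ Himp _ /Himp /andP []. Qed.

Lemma in_statics T phi : List.In phi (statics T) -> List.In (Static act phi) T.
Proof.
elim: T => [|l T IH] //=.
by case: l => [psi|b psi chi|b psi] /=; [case=> [->|/IH]; auto | auto | auto].
Qed.

Lemma pdl_ent_in T l : List.In l T -> pdl_ent (th T) (law_form l).
Proof. by move=> Hl M HM; apply: HM. Qed.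

Lemma pdl_ent_statics T phi : cpl_ent (statics T) phi -> pdl_ent (th T) (MB act phi).
Proof.
by move=> Hphi M HM w Hw; apply: Hphi => psi /in_statics /HM; apply.
Qed.

Lemma same_theory_ent T T' : same_theory T T' -> th_ent T T'.
Proof. by move=> HT l /HT; apply: pdl_ent_in. Qed.

Lemma pdl_ent_effect_mono Sig a phi psi phi' psi' :
    pdl_ent Sig (law_form (Effect a phi psi)) ->
    (forall w, beval w phi' -> beval w phi) ->
    (forall w, beval w psi -> beval w psi') ->
  pdl_ent Sig (law_form (Effect a phi' psi')).
Proof.
move=> Hent Hphi Hpsi M HM w Hw /Hphi Hw' v Hv.
exact/Hpsi/(Hent M HM w Hw Hw' v Hv).
Qed.

Lemma pdl_ent_exec_mono Sig a phi phi' :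
    pdl_ent Sig (law_form (Exec a phi)) ->
    (forall w, beval w phi' -> beval w phi) ->
  pdl_ent Sig (law_form (Exec a phi')).
Proof. by move=> Hent Hphi M HM w Hw /Hphi; apply: Hent. Qed.

Lemma pdl_ent_effect_refuted Sig a phi psi :
  pdl_ent Sig (MB act phi) -> pdl_ent Sig (law_form (Effect a (BNeg phi) psi)).
Proof. by move=> Hphi M HM w Hw /=; rewrite (Hphi M HM w Hw). Qed.

Lemma Eminus_in T a phi psi l : Eminus T a phi psi l -> List.In l T.
Proof. by case=> E' [HE' _ _ /HE' []]. Qed.

Lemma contr_exec_ent T a phi T' : contr_exec T a phi T' -> th_ent T T'.
Proof.
case=> [[_ /same_theory_ent //]|[_ [tau [A [_ _ _ HT']]]]] l /HT'.
case=> [[Hl _]|[phii [Hl ->]]]; first exact: pdl_ent_in.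
by apply: (pdl_ent_exec_mono (pdl_ent_in Hl)) => w /andP [].
Qed.

Lemma contr_effect_ent T a phi psi T' : contr_effect T a phi psi T' -> th_ent T T'.
Proof.
case=> [[_ /same_theory_ent //]|[Hent [tau [A [tau' [Hpi _ _ _ HT']]]]]] l /HT'.
case=> [[Hl _]|[phii [psii [/Eminus_in Hl ->]]]
       |[phii [psii [/Eminus_in Hl ->]]]|[ell [L [_ _ _ _ ->]]]].
- exact: pdl_ent_in.
- by apply: (pdl_ent_effect_mono (pdl_ent_in Hl)) => w // /andP [].
- by apply: (pdl_ent_effect_mono (pdl_ent_in Hl)) => w /=; [case/andP | move=> ->].
- apply: (pdl_ent_effect_mono Hent) => w /=; last by move=> ->.
  by case/andP=> /andP [/(prime_implicant_andr Hpi)].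
Qed.

Lemma contr_static_ent scontr T phi T' :
    (forall Sm, scontr (statics T) phi Sm -> cpl_ent (statics T) (bconj Sm)) ->
  contr_static scontr T phi T' -> th_ent T T'.
Proof.
move=> scontr_incl.
case=> [[_ /same_theory_ent //]|[Hphi [Sm [/scontr_incl HSm HT']]]] l /HT'.
case=> [[Hl _]|[psi [Hpsi ->]]|[b [phii [Hl ->]]]|[b ->]].
- exact: pdl_ent_in.
- exact/pdl_ent_statics/(cpl_ent_bconj_in HSm).
- by apply: (pdl_ent_exec_mono (pdl_ent_in Hl)) => w /andP [].
- exact/pdl_ent_effect_refuted/pdl_ent_statics.
Qed.

End ContractionEntailment.

Theorem lemma1 (atom act : finType)
    (scontr : seq (bform atom) -> bform atom -> seq (bform atom) -> Prop)
    (scontr_incl : forall (S : seq (bform atom)) (phi : bform atom) (Sm : seq (bform atom)),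
        scontr S phi Sm -> cpl_ent S (bconj Sm))
    (T : theory atom act) (Phi : law atom act) (T' : theory atom act) :
  contraction scontr T Phi T' -> th_ent T T'.
Proof.
case: Phi => [phi|a phi psi|a phi] /=.
- by apply: contr_static_ent => Sm /scontr_incl.
- exact: contr_effect_ent.
- exact: contr_exec_ent.
Qed.
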